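(* Let $(\mathfrak A,|\cdot|)$ and $(\mathfrak B,\|\cdot\|)$ be Banach algebras such that $\mathfrak B$ is an envelope of $\mathfrak A$ (see context), with inclusion $\iota\colon\mathfrak A\to\mathfrak B$, and let $X$ be a Banach $\mathfrak B$-bimodule. Then $X$ is a Banach $\mathfrak A$-bimodule by restriction of the actions, and $\Delta(X)$ (the module of double centralizers from $\mathfrak A$ into $X$) is a Banach $\mathfrak B$-bimodule under the actions $$b.(L,R)=(L',R'),\ L'(a)=b.L(a),\ R'(a)=R(ab);\qquad (L,R).b=(L'',R''),\ L''(a)=L(ba),\ R''(a)=R(a).b,$$ for $b\in\mathfrak B$, $(L,R)\in\Delta(X)$, $a\in\mathfrak A$. For each bounded derivation $D\colon\mathfrak A\to X$ there is a bounded derivation $\widetilde D\colon\mathfrak B\to\Delta(X)$ with $\widetilde D\circ\iota=\iota_X\circ D$, where $\iota_X(x)=(L_x,R_x)$, $L_x(a)=x.a$, $R_x(a)=a.x$. Furthermore: (i) each $(S,T)\in\Delta(X)$ determines a derivation $\mathfrak A\to X$, $a\mapsto S(a)-T(a)$; (ii) if $\overline{\mathfrak A^2}=\mathfrak A$, then $\widetilde D$ is uniquely determined by $D$ (i.e. it is the only derivation $\mathfrak B\to\Delta(X)$ with $\widetilde D\circ\iota=\iota_X\circ D$), and if $\widetilde D$ is inner, then there is $(S,T)\in\Delta(X)$ such that $D(a)=S(a)-T(a)$ for all $a\in\mathfrak A$.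
   Context: For a Banach algebra $\mathfrak A$ and Banach $\mathfrak A$-bimodule $X$: $\mathbf h_{\mathfrak A}(\mathfrak A,X)$ denotes the space of bounded right module maps $S\colon\mathfrak A\to X$ ($S(ab)=S(a).b$), and ${}_{\mathfrak A}\mathbf h(\mathfrak A,X)$ the space of bounded left module maps $T\colon\mathfrak A\to X$ ($T(ab)=a.T(b)$). A double centralizer from $\mathfrak A$ into $X$ is a pair $(S,T)\in \mathbf h_{\mathfrak A}(\mathfrak A,X)\times {}_{\mathfrak A}\mathbf h(\mathfrak A,X)$ with $a.S(\alpha)=T(a).\alpha$ for all $a,\alpha\in\mathfrak A$; the set of these, normed by $\|(S,T)\|=\max\{\|S\|,\|T\|\}$ (operator norms), is denoted $\Delta(X)$. A derivation $D\colon\mathfrak A\to X$ is a bounded linear map with $D(ab)=a.D(b)+D(a).b$; it is inner if $D(a)=a.x-x.a$ for some $x\in X$. $\mathfrak B$ is an envelope of $\mathfrak A$ if $\mathfrak A$ is a (two-sided) ideal of $\mathfrak B$ with bounded inclusion $\iota\colon\mathfrak A\to\mathfrak B$, and there is $C>0$ with $\max\{|ba|,|ab|\}\le C|a|\|b\|$ for $a\in\mathfrak A$, $b\in\mathfrak B$. *)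

From HB Require Import structures.
From mathcomp Require Import all_boot all_order all_algebra.
From mathcomp Require Import all_classical all_reals all_analysis.
Set Implicit Arguments. Unset Strict Implicit. Unset Printing Implicit Defensive.
Import Order.TTheory GRing.Theory Num.Theory.
Import numFieldNormedType.Exports.
Local Open Scope ring_scope.
Local Open Scope classical_set_scope.

Section BanachDefs.
Context {K : numFieldType}.

Definition lin {U V : lmodType K} (f : U -> V) : Prop :=
  forall (k : K) (u v : U), f (k *: u + v) = k *: f u + f v.

Definition bounded_by {U V : normedModType K} (f : U -> V) (M : K) : Prop :=
  forall u, `|f u| <= M * `|u|.

Definition bounded_lin {U V : normedModType K} (f : U -> V) : Prop :=
  lin f /\ exists C : K, bounded_by f C.

Definition banach_algebra {A : completeNormedModType K} (mul : A -> A -> A) : Prop :=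
  (forall a b c, mul a (mul b c) = mul (mul a b) c) /\
  (forall a, lin (mul a)) /\ (forall b, lin (fun a => mul a b)) /\
  (forall a b, `|mul a b| <= `|a| * `|b|).

Definition banach_bimodule {A X : completeNormedModType K} (mul : A -> A -> A)
  (l : A -> X -> X) (r : X -> A -> X) : Prop :=
  (forall a, lin (l a)) /\ (forall x, lin (fun a => l a x)) /\
  (forall a, lin (fun x => r x a)) /\ (forall x, lin (r x)) /\
  (forall a b x, l (mul a b) x = l a (l b x)) /\
  (forall x a b, r x (mul a b) = r (r x a) b) /\
  (forall a x b, l a (r x b) = r (l a x) b) /\
  (exists C : K, 0 < C /\ forall a x,
      `|l a x| <= C * `|a| * `|x| /\ `|r x a| <= C * `|x| * `|a|).

(* B is an envelope of A: iota is the (injective, bounded, multiplicative)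
   inclusion; A is a two-sided ideal of B, the products b.a and a.b (as
   elements of A) being given by bA and aB; and the norm estimate holds. *)
Definition envelope {A B : completeNormedModType K} (mulA : A -> A -> A)
  (mulB : B -> B -> B) (iota : A -> B) (bA : B -> A -> A) (aB : A -> B -> A) : Prop :=
  bounded_lin iota /\ injective iota /\
  (forall a a', iota (mulA a a') = mulB (iota a) (iota a')) /\
  (forall b a, iota (bA b a) = mulB b (iota a)) /\
  (forall a b, iota (aB a b) = mulB (iota a) b) /\
  (exists C : K, 0 < C /\ forall a b,
      `|bA b a| <= C * `|a| * `|b| /\ `|aB a b| <= C * `|a| * `|b|).

Definition derivation {A X : completeNormedModType K} (mul : A -> A -> A)
  (l : A -> X -> X) (r : X -> A -> X) (D : A -> X) : Prop :=
  bounded_lin D /\ forall a b, D (mul a b) = l a (D b) + r (D a) b.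

Definition dpair (A X : completeNormedModType K) := ((A -> X) * (A -> X))%type.

Definition padd {A X : completeNormedModType K} (p q : dpair A X) : dpair A X :=
  (fun a => p.1 a + q.1 a, fun a => p.2 a + q.2 a).
Definition pscale {A X : completeNormedModType K} (k : K) (p : dpair A X) : dpair A X :=
  (fun a => k *: p.1 a, fun a => k *: p.2 a).
Definition psub {A X : completeNormedModType K} (p q : dpair A X) : dpair A X :=
  (fun a => p.1 a - q.1 a, fun a => p.2 a - q.2 a).
Definition pzero {A X : completeNormedModType K} : dpair A X :=
  (fun _ => 0, fun _ => 0).

(* ||(S,T)|| = max(||S||,||T||) <= M *)
Definition dc_bounded {A X : completeNormedModType K} (p : dpair A X) (M : K) : Prop :=
  bounded_by p.1 M /\ bounded_by p.2 M.

Definition right_map {A X : completeNormedModType K} (mulA : A -> A -> A)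
  (ra : X -> A -> X) (S : A -> X) : Prop :=
  bounded_lin S /\ forall a b, S (mulA a b) = ra (S a) b.
Definition left_map {A X : completeNormedModType K} (mulA : A -> A -> A)
  (la : A -> X -> X) (T : A -> X) : Prop :=
  bounded_lin T /\ forall a b, T (mulA a b) = la a (T b).
Definition is_dc {A X : completeNormedModType K} (mulA : A -> A -> A)
  (la : A -> X -> X) (ra : X -> A -> X) (p : dpair A X) : Prop :=
  right_map mulA ra p.1 /\ left_map mulA la p.2 /\
  forall a alpha, la a (p.1 alpha) = ra (p.2 a) alpha.

Definition dc_lact {A B X : completeNormedModType K} (lB : B -> X -> X)
  (aB : A -> B -> A) (b : B) (p : dpair A X) : dpair A X :=
  (fun a => lB b (p.1 a), fun a => p.2 (aB a b)).
Definition dc_ract {A B X : completeNormedModType K} (rB : X -> B -> X)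
  (bA : B -> A -> A) (p : dpair A X) (b : B) : dpair A X :=
  (fun a => p.1 (bA b a), fun a => rB (p.2 a) b).

Definition iotaX {A X : completeNormedModType K} (la : A -> X -> X)
  (ra : X -> A -> X) (x : X) : dpair A X :=
  (fun a => ra x a, fun a => la a x).

Definition dc_complete {A X : completeNormedModType K} (dc : dpair A X -> Prop) : Prop :=
  forall u : nat -> dpair A X, (forall n, dc (u n)) ->
  (forall e : K, 0 < e -> exists N, forall m n, (N <= m)%N -> (N <= n)%N ->
      dc_bounded (psub (u m) (u n)) e) ->
  exists p, dc p /\ forall e : K, 0 < e -> exists N, forall n, (N <= n)%N ->
      dc_bounded (psub (u n) p) e.

Definition dc_banach_bimodule {A B X : completeNormedModType K}
  (dc : dpair A X -> Prop) (mulB : B -> B -> B)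
  (lact : B -> dpair A X -> dpair A X) (ract : dpair A X -> B -> dpair A X) : Prop :=
  dc pzero /\
  (forall k p q, dc p -> dc q -> dc (padd (pscale k p) q)) /\
  (forall b p, dc p -> dc (lact b p) /\ dc (ract p b)) /\
  (forall k b c p, dc p ->
      lact (k *: b + c) p = padd (pscale k (lact b p)) (lact c p) /\
      ract p (k *: b + c) = padd (pscale k (ract p b)) (ract p c)) /\
  (forall k b p q, dc p -> dc q ->
      lact b (padd (pscale k p) q) = padd (pscale k (lact b p)) (lact b q) /\
      ract (padd (pscale k p) q) b = padd (pscale k (ract p b)) (ract q b)) /\
  (forall b c p, dc p ->
      lact (mulB b c) p = lact b (lact c p) /\
      ract p (mulB b c) = ract (ract p b) c /\
      lact b (ract p c) = ract (lact b p) c) /\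
  (exists C : K, 0 < C /\ forall b p M, dc p -> 0 <= M -> dc_bounded p M ->
      dc_bounded (lact b p) (C * `|b| * M) /\ dc_bounded (ract p b) (C * `|b| * M)) /\
  dc_complete dc.

Definition dc_derivation {A B X : completeNormedModType K}
  (dc : dpair A X -> Prop) (mulB : B -> B -> B)
  (lact : B -> dpair A X -> dpair A X) (ract : dpair A X -> B -> dpair A X)
  (Dt : B -> dpair A X) : Prop :=
  (forall b, dc (Dt b)) /\
  (forall k b c, Dt (k *: b + c) = padd (pscale k (Dt b)) (Dt c)) /\
  (exists C : K, forall b, dc_bounded (Dt b) (C * `|b|)) /\
  (forall b c, Dt (mulB b c) = padd (lact b (Dt c)) (ract (Dt b) c)).

Definition dc_inner {A B X : completeNormedModType K}
  (dc : dpair A X -> Prop)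
  (lact : B -> dpair A X -> dpair A X) (ract : dpair A X -> B -> dpair A X)
  (Dt : B -> dpair A X) : Prop :=
  exists p, dc p /\ forall b, Dt b = psub (lact b p) (ract p b).

Definition dense_square {A : completeNormedModType K} (mulA : A -> A -> A) : Prop :=
  closure [set x | exists s : seq (A * A), x = \sum_(q <- s) mulA q.1 q.2] = setT.

End BanachDefs.

(* Since A is an ideal of B, an element b of B acts on a double centralizer
   (S, T) by moving b inside the argument where it lands back in A.  The
   extension of D sends b to the pair (a |-> D(b a) - b.D(a), a |-> D(a b) -
   D(a).b), which measures how far D is from commuting with multiplication by
   b; at b = iota a0 the Leibniz rule turns it into iota_X (D a0).
   Conversely, the Leibniz rule of any extension at b (iota a) and (iota a) b
   forces these formulas on products a a', so by density of A^2 and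
   continuity the extension is unique; and evaluating an inner extension at
   b = iota a exhibits D as the difference of the two components of a double
   centralizer.  Completeness of Delta(X) comes from uniform convergence of
   the component operators. *)
From Pilot Require Import Defs.
From HB Require Import structures.
From mathcomp Require Import all_boot all_order all_algebra.
From mathcomp Require Import all_classical all_reals all_analysis.
From mathcomp Require Import ring.
Import Order.TTheory GRing.Theory Num.Theory.
Import numFieldNormedType.Exports.
Local Open Scope ring_scope.
Local Open Scope classical_set_scope.
Set Implicit Arguments. Unset Strict Implicit. Unset Printing Implicit Defensive.

Section BoundedLinear.
Context {K : numFieldType}.

Section Linear.
Variables (U V : lmodType K) (f : U -> V).
Hypothesis f_lin : lin f.

Lemma lin0 : f 0 = 0.
Proof.
have := f_lin 1 0 0; rewrite !scale1r addr0 => f00.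
by apply: (@addrI _ (f 0)); rewrite addr0 -f00.
Qed.

Lemma linD u v : f (u + v) = f u + f v.
Proof. by have := f_lin 1 u v; rewrite !scale1r. Qed.

Lemma linN u : f (- u) = - f u.
Proof. by rewrite -scaleN1r -[_ *: u]addr0 f_lin lin0 addr0 scaleN1r. Qed.

Lemma linB u v : f (u - v) = f u - f v.
Proof. by rewrite linD linN. Qed.

End Linear.

Lemma bounded_by_gt0 (U V : normedModType K) (f : U -> V) M :
  bounded_by f M -> exists2 M', 0 < M' & bounded_by f M'.
Proof.
move=> fM; exists (`|M| + 1) => [|u]; first by rewrite ltr_wpDl.
apply: le_trans (fM u) _.
have Mu_ge0 : 0 <= M * `|u| by apply: le_trans (fM u).
by rewrite -(ger0_norm Mu_ge0) normrM normr_id ler_wpM2r // lerDl.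
Qed.

Lemma bounded_lin_gt0 (U V : normedModType K) (f : U -> V) :
  bounded_lin f -> exists2 M, 0 < M & bounded_by f M.
Proof. by case=> _ [M /bounded_by_gt0]. Qed.

Lemma bounded_lin0 (U V : normedModType K) : bounded_lin (fun _ : U => 0 : V).
Proof.
split; first by move=> k u v; rewrite scaler0 addr0.
by exists 0 => u; rewrite normr0 mul0r.
Qed.

Lemma bounded_lin_comb (U V : normedModType K) (f g : U -> V) (k : K) :
  bounded_lin f -> bounded_lin g -> bounded_lin (fun u => k *: f u + g u).
Proof.
move=> bf bg; have [Mf Mf_gt0 fM] := bounded_lin_gt0 bf.
have [Mg Mg_gt0 gM] := bounded_lin_gt0 bg.
split=> [c u v|].
  rewrite bf.1 bg.1 !scalerDr !scalerA addrACA.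
  by rewrite [c * k]mulrC [in RHS]addrC [k * c]mulrC addrC.
exists (`|k| * Mf + Mg) => u; apply: le_trans (ler_normD _ _) _.
rewrite normrZ mulrDl -mulrA; apply: lerD => //.
by apply: ler_wpM2l.
Qed.

Lemma bounded_linB (U V : normedModType K) (f g : U -> V) :
  bounded_lin f -> bounded_lin g -> bounded_lin (fun u => f u - g u).
Proof.
move=> bf bg; have := bounded_lin_comb (-1) bg bf.
by congr bounded_lin; apply: funext => u; rewrite scaleN1r addrC.
Qed.

Lemma bounded_linN (U V : normedModType K) (f : U -> V) :
  bounded_lin f -> bounded_lin (fun u => - f u).
Proof.
move=> bf; have := bounded_linB (@bounded_lin0 U V) bf.
by congr bounded_lin; apply: funext => u; rewrite sub0r.
Qed.

Lemma bounded_lin_comp (U V W : normedModType K) (f : U -> V) (g : V -> W) :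
  bounded_lin f -> bounded_lin g -> bounded_lin (fun u => g (f u)).
Proof.
move=> bf bg; have [Mf Mf_gt0 fM] := bounded_lin_gt0 bf.
have [Mg Mg_gt0 gM] := bounded_lin_gt0 bg.
split=> [k u v|]; first by rewrite bf.1 bg.1.
exists (Mg * Mf) => u; apply: le_trans (gM _) _.
by rewrite -mulrA; apply: ler_wpM2l; [exact: ltW | exact: fM].
Qed.

Lemma bounded_lin_cvg (U V : normedModType K) (f : U -> V) (v : nat -> U) (y : U) :
  bounded_lin f -> v n @[n --> \oo] --> y -> f (v n) @[n --> \oo] --> f y.
Proof.
move=> bf v_y; have [M M_gt0 fM] := bounded_lin_gt0 bf.
apply/(@cvgrPdist_lt _ _ _ _ _ (fun n => f (v n))) => e e_gt0.
have [N _ vN] := (@cvgrPdist_lt _ _ _ _ _ v y).1 v_y _ (divr_gt0 e_gt0 M_gt0).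
exists N => // n /vN /= vn; rewrite -(linB bf.1); apply: le_lt_trans (fM _) _.
by rewrite mulrC -ltr_pdivlMr.
Qed.

Lemma cvg_eq (V : normedModType K) (v : nat -> V) (y z : V) :
  v n @[n --> \oo] --> y -> v n @[n --> \oo] --> z -> y = z.
Proof. exact: (cvg_unique (@norm_hausdorff K V)). Qed.

Lemma cauchy_seq_cvg (V : completeNormedModType K) (v : nat -> V) :
  (forall e : K, 0 < e -> exists N, forall m n, (N <= m)%N -> (N <= n)%N ->
     `|v m - v n| <= e) ->
  cvg (v n @[n --> \oo]).
Proof.
move=> v_cauchy; apply: cauchy_cvg; apply/cauchyP => e e_gt0.
have [N vN] := v_cauchy (e / 2) (divr_gt0 e_gt0 (ltr0Sn _ 1)).
exists (v N); exists N => // n /= Nn; rewrite -ball_normE /ball_ /=.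
by apply: le_lt_trans (vN _ _ (leqnn N) Nn) _; rewrite ltr_pdivrMr // ltr_pMr // ltr1n.
Qed.

Lemma cauchy_lim_dist_le (V : normedModType K) (v : nat -> V) (y : V) N (e : K) :
  v n @[n --> \oo] --> y ->
  (forall m n, (N <= m)%N -> (N <= n)%N -> `|v m - v n| <= e) ->
  forall n, (N <= n)%N -> `|v n - y| <= e.
Proof.
move=> v_y vN n Nn; apply/ler_addgt0Pr => d d_gt0.
have [N' _ vN'] := (@cvgrPdist_lt _ _ _ _ _ v y).1 v_y d d_gt0.
have y_near : `|y - v (maxn N N')| < d by apply: vN'; rewrite /= leq_maxr.
rewrite -(subrK (v (maxn N N')) (v n)) -addrA.
apply: le_trans (ler_normD _ _) _; apply: lerD; first by rewrite vN ?leq_maxl.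
by rewrite distrC ltW.
Qed.

Lemma uniform_lim_bounded_lin (U : normedModType K) (V : completeNormedModType K)
    (f : nat -> U -> V) :
  (forall n, bounded_lin (f n)) ->
  (forall e : K, 0 < e -> exists N, forall m n, (N <= m)%N -> (N <= n)%N ->
     bounded_by (fun u => f m u - f n u) e) ->
  exists F, [/\ bounded_lin F, forall u, f n u @[n --> \oo] --> F u &
    forall e : K, 0 < e -> exists N, forall n, (N <= n)%N ->
      bounded_by (fun u => f n u - F u) e].
Proof.
move=> bf f_cauchy.
have f_cvg u : cvg (f n u @[n --> \oo]).
  apply: cauchy_seq_cvg => e e_gt0.
  have u1_gt0 : 0 < `|u| + 1 by rewrite ltr_wpDl.
  have [N fN] := f_cauchy _ (divr_gt0 e_gt0 u1_gt0).
  exists N => m n Nm Nn; apply: le_trans (fN m n Nm Nn u) _.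
  by rewrite -mulrA ler_piMr ?(ltW e_gt0) // ler_pdivrMl // mulr1 lerDl.
pose F u := lim (f n u @[n --> \oo]).
have f_F u : f n u @[n --> \oo] --> F u by exact: f_cvg.
have f_unif e : 0 < e -> exists N, forall n, (N <= n)%N ->
    bounded_by (fun u => f n u - F u) e.
  move=> /f_cauchy[N fN]; exists N => n Nn u.
  by apply: (cauchy_lim_dist_le (f_F u)) Nn => m m' Nm Nm'; apply: fN.
exists F; split => //; split=> [k u v|].
  apply: (cvg_eq (f_F (k *: u + v))).
  under eq_fun do rewrite (bf _).1.
  exact: cvgD (cvgZ (cvg_cst k) (f_F u)) (f_F v).
have [N fN] := f_unif 1 ltr01; have [M M_gt0 fNM] := bounded_lin_gt0 (bf N).
exists (1 + M) => u; rewrite -(subrK (f N u) (F u)) mulrDl.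
apply: le_trans (ler_normD _ _) _; apply: lerD => //.
by rewrite -normrN opprB; apply: fN.
Qed.

Lemma bounded_lin_eq_dense (U V : normedModType K) (f g : U -> V) (S : set U) :
  bounded_lin f -> bounded_lin g -> closure S = setT ->
  (forall x, S x -> f x = g x) -> f = g.
Proof.
move=> bf bg S_dense fg; have [Mf Mf_gt0 fM] := bounded_lin_gt0 bf.
have [Mg Mg_gt0 gM] := bounded_lin_gt0 bg.
have M_gt0 : 0 < Mf + Mg by rewrite addr_gt0.
apply: funext => x; apply/eqP; rewrite -subr_eq0 -normr_le0.
apply/ler_addgt0Pr => e e_gt0; rewrite add0r.
have : closure S x by rewrite S_dense.
move=> /(_ _ (nbhsx_ballx x _ (divr_gt0 e_gt0 M_gt0))) [y [Sy]].
rewrite -ball_normE /ball_ /= => xy.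
have -> : f x - g x = f (x - y) - g (x - y).
  by rewrite (linB bf.1) (linB bg.1) (fg y Sy) opprB addrA subrK.
apply: le_trans (ler_normB _ _) _; apply: le_trans (lerD (fM _) (gM _)) _.
by rewrite -mulrDl mulrC -ler_pdivlMr // ltW.
Qed.

Lemma bounded_lin_eq_dense_square (A : completeNormedModType K) (V : normedModType K)
    (mulA : A -> A -> A) (f g : A -> V) :
  dense_square mulA -> bounded_lin f -> bounded_lin g ->
  (forall a a', f (mulA a a') = g (mulA a a')) -> f = g.
Proof.
move=> A2_dense bf bg fg; apply: (bounded_lin_eq_dense bf bg A2_dense) => _ [s ->].
elim: s => [|q s IHs]; first by rewrite !big_nil (lin0 bf.1) (lin0 bg.1).
by rewrite !big_cons (linD bf.1) (linD bg.1) IHs fg.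
Qed.

End BoundedLinear.

Lemma dpair_ext {K : numFieldType} (A X : completeNormedModType K) (p q : Defs.dpair A X) :
  p.1 =1 q.1 -> p.2 =1 q.2 -> p = q.
Proof. by case: p q => [p1 p2] [q1 q2] /= h1 h2; congr pair; apply: funext. Qed.

Section Envelope.
Context {K : numFieldType} (A B : completeNormedModType K)
  (mulA : A -> A -> A) (mulB : B -> B -> B) (iota : A -> B)
  (bA : B -> A -> A) (aB : A -> B -> A).
Hypotheses (HB : banach_algebra mulB) (HE : envelope mulA mulB iota bA aB).

Lemma mulBA b c d : mulB b (mulB c d) = mulB (mulB b c) d.
Proof. by case: HB. Qed.
Lemma mulBDr k b c d : mulB b (k *: c + d) = k *: mulB b c + mulB b d.
Proof. by case: HB => _ [+ _]; apply. Qed.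
Lemma mulBDl k b c d : mulB (k *: b + c) d = k *: mulB b d + mulB c d.
Proof. by case: HB => _ [_ [+ _]] => /(_ d); apply. Qed.

Lemma iota_bounded_lin : bounded_lin iota.
Proof. by case: HE. Qed.
Lemma iotaD k a a' : iota (k *: a + a') = k *: iota a + iota a'.
Proof. exact: iota_bounded_lin.1. Qed.
Lemma iota_inj : injective iota.
Proof. by case: HE => _ []. Qed.
Lemma iotaM a a' : iota (mulA a a') = mulB (iota a) (iota a').
Proof. by case: HE => _ [_ []]. Qed.
Lemma iota_bA b a : iota (bA b a) = mulB b (iota a).
Proof. by case: HE => _ [_ [_ []]]. Qed.
Lemma iota_aB a b : iota (aB a b) = mulB (iota a) b.
Proof. by case: HE => _ [_ [_ [_ []]]]. Qed.
Lemma envelope_bound : exists C : K, 0 < C /\ forall a b,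
  `|bA b a| <= C * `|a| * `|b| /\ `|aB a b| <= C * `|a| * `|b|.
Proof. by case: HE => _ [_ [_ [_ []]]]. Qed.

(* Identities in A are checked in B, through the injective iota. *)
Local Ltac by_iota :=
  by apply: iota_inj; rewrite !(iotaD, iotaM, iota_bA, iota_aB) ?(mulBA, mulBDl, mulBDr).

Lemma bADl k b c a : bA (k *: b + c) a = k *: bA b a + bA c a.
Proof. by_iota. Qed.
Lemma bA_lin b : lin (bA b).
Proof. move=> k a a'; by_iota. Qed.
Lemma aBDr k a b c : aB a (k *: b + c) = k *: aB a b + aB a c.
Proof. by_iota. Qed.
Lemma aB_lin b : lin (fun a => aB a b).
Proof. move=> k a a' /=; by_iota. Qed.
Lemma bA_iota a0 a : bA (iota a0) a = mulA a0 a.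
Proof. by_iota. Qed.
Lemma aB_iota a a0 : aB a (iota a0) = mulA a a0.
Proof. by_iota. Qed.
Lemma bA_mul b c a : bA (mulB b c) a = bA b (bA c a).
Proof. by_iota. Qed.
Lemma aB_mul a b c : aB a (mulB b c) = aB (aB a b) c.
Proof. by_iota. Qed.
Lemma bA_mulA b a a' : bA b (mulA a a') = mulA (bA b a) a'.
Proof. by_iota. Qed.
Lemma aB_mulA a a' b : aB (mulA a a') b = mulA a (aB a' b).
Proof. by_iota. Qed.
Lemma mulA_bA a b a' : mulA a (bA b a') = mulA (aB a b) a'.
Proof. by_iota. Qed.

Lemma bA_bounded_lin b : bounded_lin (bA b).
Proof.
split; first exact: bA_lin.
have [C [_ CE]] := envelope_bound; exists (C * `|b|) => a.
by rewrite mulrAC; exact: (CE a b).1.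
Qed.
Lemma aB_bounded_lin b : bounded_lin (fun a => aB a b).
Proof.
split; first exact: aB_lin.
have [C [_ CE]] := envelope_bound; exists (C * `|b|) => a.
by rewrite mulrAC; exact: (CE a b).2.
Qed.

End Envelope.

Section Bimodule.
Context {K : numFieldType} (B X : completeNormedModType K)
  (mulB : B -> B -> B) (lB : B -> X -> X) (rB : X -> B -> X).
Hypothesis HX : banach_bimodule mulB lB rB.

Lemma lB_lin b : lin (lB b).
Proof. by case: HX. Qed.
Lemma lBDl k b c x : lB (k *: b + c) x = k *: lB b x + lB c x.
Proof. by case: HX => _ [+ _] => /(_ x); apply. Qed.
Lemma rB_lin b : lin (fun x => rB x b).
Proof. by case: HX => _ [_ []]. Qed.
Lemma rBDr k x b c : rB x (k *: b + c) = k *: rB x b + rB x c.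
Proof. by case: HX => _ [_ [_ [+ _]]] => /(_ x); apply. Qed.
Lemma lB_mul b c x : lB (mulB b c) x = lB b (lB c x).
Proof. by case: HX => _ [_ [_ [_ []]]]. Qed.
Lemma rB_mul x b c : rB x (mulB b c) = rB (rB x b) c.
Proof. by case: HX => _ [_ [_ [_ [_ []]]]]. Qed.
Lemma lB_rB b x c : lB b (rB x c) = rB (lB b x) c.
Proof. by case: HX => _ [_ [_ [_ [_ [_ []]]]]]. Qed.
Lemma bimodule_bound : exists C : K, 0 < C /\ forall b x,
  `|lB b x| <= C * `|b| * `|x| /\ `|rB x b| <= C * `|x| * `|b|.
Proof. by case: HX => _ [_ [_ [_ [_ [_ []]]]]]. Qed.

Lemma lB_bounded_lin b : bounded_lin (lB b).
Proof.
split; first exact: lB_lin.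
by have [C [_ CX]] := bimodule_bound; exists (C * `|b|) => x; exact: (CX b x).1.
Qed.
Lemma rB_bounded_lin b : bounded_lin (fun x => rB x b).
Proof.
split; first exact: rB_lin.
have [C [_ CX]] := bimodule_bound; exists (C * `|b|) => x.
by rewrite mulrAC; exact: (CX b x).2.
Qed.

Lemma rBB x y b : rB (x - y) b = rB x b - rB y b.
Proof. exact: (linB (rB_lin b)). Qed.
Lemma rBN x b : rB (- x) b = - rB x b.
Proof. exact: (linN (rB_lin b)). Qed.

End Bimodule.

Section DoubleCentralizers.
Context {K : numFieldType} (A B X : completeNormedModType K)
  (mulA : A -> A -> A) (mulB : B -> B -> B) (iota : A -> B)
  (bA : B -> A -> A) (aB : A -> B -> A) (lB : B -> X -> X) (rB : X -> B -> X).
Hypotheses (HB : banach_algebra mulB) (HE : envelope mulA mulB iota bA aB)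
  (HX : banach_bimodule mulB lB rB).

Local Notation la := (fun a x => lB (iota a) x).
Local Notation ra := (fun x a => rB x (iota a)).
Local Notation dc := (is_dc mulA la ra).
Local Notation lact := (dc_lact lB aB).
Local Notation ract := (dc_ract rB bA).

Lemma restricted_banach_bimodule : banach_bimodule mulA la ra.
Proof.
split; first by move=> a; exact: (lB_lin HX).
split; first by move=> x k a a'; rewrite /= (iotaD HE) (lBDl HX).
split; first by move=> a; exact: (rB_lin HX).
split; first by move=> x k a a'; rewrite /= (iotaD HE) (rBDr HX).
split; first by move=> a a' x; rewrite /= (iotaM HE) (lB_mul HX).
split; first by move=> x a a'; rewrite /= (iotaM HE) (rB_mul HX).
split; first by move=> a x a'; rewrite /= (lB_rB HX).
have [C [C_gt0 CX]] := bimodule_bound HX.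
have [M M_gt0 iota_le] := bounded_lin_gt0 (iota_bounded_lin HE).
exists (C * M); split=> [|a x]; first by rewrite mulr_gt0.
split; [apply: le_trans (CX _ _).1 _ | apply: le_trans (CX _ _).2 _].
- rewrite -(mulrA C M); apply: ler_wpM2r => //; apply: ler_wpM2l; [exact: ltW | exact: iota_le].
- rewrite [C * M * _]mulrAC -(mulrA (C * `|x|)).
  by apply: ler_wpM2l; [rewrite mulr_ge0 // ltW | exact: iota_le].
Qed.

Lemma is_dc0 : dc pzero.
Proof.
split; [|split].
- split; first exact: bounded_lin0.
  by move=> a a' /=; rewrite (lin0 (rB_lin HX _)).
- split; first exact: bounded_lin0.
  by move=> a a' /=; rewrite (lin0 (lB_lin HX _)).
- by move=> a a' /=; rewrite (lin0 (lB_lin HX _)) (lin0 (rB_lin HX _)).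
Qed.

Lemma is_dc_comb k p q : dc p -> dc q -> dc (padd (pscale k p) q).
Proof.
move=> [[bp1 ep1] [[bp2 ep2] cp]] [[bq1 eq1] [[bq2 eq2] cq]].
split; [|split].
- split=> [|a a' /=]; first exact: bounded_lin_comb.
  by rewrite ep1 eq1 (rB_lin HX).
- split=> [|a a' /=]; first exact: bounded_lin_comb.
  by rewrite ep2 eq2 (lB_lin HX).
- move=> a a' /=; rewrite (lB_lin HX) (rB_lin HX).
  by move: (cp a a') (cq a a') => /= -> ->.
Qed.

Lemma is_dc_lact b p : dc p -> dc (lact b p).
Proof.
move=> [[bp1 ep1] [[bp2 ep2] cp]]; split; [|split].
- split=> [|a a' /=]; first exact: bounded_lin_comp bp1 (lB_bounded_lin HX b).
  by rewrite ep1 (lB_rB HX).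
- split=> [|a a' /=]; first exact: bounded_lin_comp (aB_bounded_lin HB HE b) bp2.
  by rewrite (aB_mulA HB HE) ep2.
- move=> a a' /=; move: (cp (aB a b) a') => /= <-.
  by rewrite (iota_aB HE) (lB_mul HX).
Qed.

Lemma is_dc_ract b p : dc p -> dc (ract p b).
Proof.
move=> [[bp1 ep1] [[bp2 ep2] cp]]; split; [|split].
- split=> [|a a' /=]; first exact: bounded_lin_comp (bA_bounded_lin HB HE b) bp1.
  by rewrite (bA_mulA HB HE) ep1.
- split=> [|a a' /=]; first exact: bounded_lin_comp bp2 (rB_bounded_lin HX b).
  by rewrite ep2 (lB_rB HX).
- move=> a a' /=; move: (cp a (bA b a')) => /= ->.
  by rewrite (iota_bA HE) (rB_mul HX).
Qed.

Lemma dc_acts_linear_in_b k b c p : dc p ->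
  lact (k *: b + c) p = padd (pscale k (lact b p)) (lact c p) /\
  ract p (k *: b + c) = padd (pscale k (ract p b)) (ract p c).
Proof.
move=> [[[p1_lin _] _] [[[p2_lin _] _] _]].
split; apply: dpair_ext => a /=.
- exact: (lBDl HX).
- by rewrite (aBDr HB HE) p2_lin.
- by rewrite (bADl HB HE) p1_lin.
- exact: (rBDr HX).
Qed.

Lemma dc_acts_linear_in_p k b p q :
  lact b (padd (pscale k p) q) = padd (pscale k (lact b p)) (lact b q) /\
  ract (padd (pscale k p) q) b = padd (pscale k (ract p b)) (ract q b).
Proof. by split; apply: dpair_ext => a //=; [exact: (lB_lin HX) | exact: (rB_lin HX)]. Qed.

Lemma dc_bimodule_laws b c p :
  lact (mulB b c) p = lact b (lact c p) /\
  ract p (mulB b c) = ract (ract p b) c /\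
  lact b (ract p c) = ract (lact b p) c.
Proof.
split; [|split]; apply: dpair_ext => a //=.
- exact: (lB_mul HX).
- by rewrite (aB_mul HB HE).
- by rewrite (bA_mul HB HE).
- exact: (rB_mul HX).
Qed.

Lemma dc_acts_bounded : exists C : K, 0 < C /\ forall b p M, 0 <= M ->
  dc_bounded p M ->
  dc_bounded (lact b p) (C * `|b| * M) /\ dc_bounded (ract p b) (C * `|b| * M).
Proof.
have [Cx [Cx_gt0 CX]] := bimodule_bound HX.
have [Ce [Ce_gt0 CE]] := envelope_bound HE.
exists (Cx + Ce); split=> [|b p M M_ge0 [pM1 pM2]]; first by rewrite addr_gt0.
have widen c (a : A) : 0 <= c -> c <= Cx + Ce ->
    c * (`|b| * (M * `|a|)) <= (Cx + Ce) * `|b| * M * `|a|.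
  by move=> c_ge0 c_le; rewrite -!mulrA; apply: ler_wpM2r; rewrite ?mulr_ge0.
have Cx_le : Cx <= Cx + Ce by rewrite lerDl ltW.
have Ce_le : Ce <= Cx + Ce by rewrite lerDr ltW.
split; split => a /=.
- apply: le_trans (CX _ _).1 _; apply: le_trans _ (widen Cx a (ltW Cx_gt0) Cx_le).
  by rewrite mulrA; apply: ler_wpM2l; [rewrite mulr_ge0 // ltW | exact: pM1].
- apply: le_trans (pM2 _) _; apply: le_trans _ (widen Ce a (ltW Ce_gt0) Ce_le).
  apply: le_trans (ler_wpM2l M_ge0 (CE _ _).2) _.
  by rewrite le_eqVlt; apply/orP; left; apply/eqP; ring.
- apply: le_trans (pM1 _) _; apply: le_trans _ (widen Ce a (ltW Ce_gt0) Ce_le).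
  apply: le_trans (ler_wpM2l M_ge0 (CE _ _).1) _.
  by rewrite le_eqVlt; apply/orP; left; apply/eqP; ring.
- apply: le_trans (CX _ _).2 _; apply: le_trans _ (widen Cx a (ltW Cx_gt0) Cx_le).
  apply: le_trans (ler_wpM2r (normr_ge0 b) (ler_wpM2l (ltW Cx_gt0) (pM2 a))) _.
  by rewrite le_eqVlt; apply/orP; left; apply/eqP; ring.
Qed.

Lemma is_dc_complete : dc_complete dc.
Proof.
move=> u u_dc u_cauchy.
have [F1 [F1_bl u1_F1 u1_unif]] := uniform_lim_bounded_lin (fun n => (u_dc n).1.1)
  (fun e e_gt0 => let: ex_intro N uN := u_cauchy e e_gt0 in
     ex_intro _ N (fun m n Nm Nn => (uN m n Nm Nn).1)).
have [F2 [F2_bl u2_F2 u2_unif]] := uniform_lim_bounded_lin (fun n => (u_dc n).2.1.1)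
  (fun e e_gt0 => let: ex_intro N uN := u_cauchy e e_gt0 in
     ex_intro _ N (fun m n Nm Nn => (uN m n Nm Nn).2)).
exists (F1, F2); split.
  split; [|split].
  - split=> // a a' /=; apply: (cvg_eq (u1_F1 (mulA a a'))).
    under eq_fun do rewrite (u_dc _).1.2.
    exact: (bounded_lin_cvg (rB_bounded_lin HX (iota a')) (u1_F1 a)).
  - split=> // a a' /=; apply: (cvg_eq (u2_F2 (mulA a a'))).
    under eq_fun do rewrite (u_dc _).2.1.2.
    exact: (bounded_lin_cvg (lB_bounded_lin HX (iota a)) (u2_F2 a')).
  - move=> a a' /=.
    apply: (cvg_eq (bounded_lin_cvg (lB_bounded_lin HX (iota a)) (u1_F1 a'))).
    under eq_fun do rewrite [lB _ _](u_dc _).2.2.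
    exact: (bounded_lin_cvg (rB_bounded_lin HX (iota a')) (u2_F2 a)).
move=> e e_gt0; have [N1 uN1] := u1_unif e e_gt0; have [N2 uN2] := u2_unif e e_gt0.
exists (maxn N1 N2) => n; rewrite geq_max => /andP[N1n N2n].
by split; [exact: uN1 | exact: uN2].
Qed.

Lemma dc_banach_bimodule_envelope : dc_banach_bimodule dc mulB lact ract.
Proof.
split; first exact: is_dc0.
split; first by move=> k p q; exact: is_dc_comb.
split; first by move=> b p p_dc; split; [exact: is_dc_lact | exact: is_dc_ract].
split; first by move=> k b c p; exact: dc_acts_linear_in_b.
split; first by move=> k b p q _ _; exact: dc_acts_linear_in_p.
split; first by move=> b c p _; exact: dc_bimodule_laws.
split; last exact: is_dc_complete.
have [C [C_gt0 CB]] := dc_acts_bounded.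
by exists C; split=> // b p M _; exact: CB.
Qed.

Lemma is_dc_diff_derivation p : dc p -> derivation mulA la ra (fun a => p.1 a - p.2 a).
Proof.
move=> [[bp1 ep1] [[bp2 ep2] cp]]; split=> [|a a' /=]; first exact: bounded_linB.
rewrite ep1 ep2 (linB (lB_lin HX _)) (rBB HX) (cp a a').
by rewrite [RHS]addrC addrA subrK.
Qed.

Section Extension.
Variable D : A -> X.
Hypothesis D_der : derivation mulA la ra D.

Let D_bounded_lin : bounded_lin D.
Proof. by case: D_der. Qed.
Let DM a a' : D (mulA a a') = lB (iota a) (D a') + rB (D a) (iota a').
Proof. by case: D_der. Qed.

Definition ext_der (b : B) : Defs.dpair A X :=
  (fun a => D (bA b a) - lB b (D a), fun a => D (aB a b) - rB (D a) b).

Lemma is_dc_ext_der b : dc (ext_der b).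
Proof.
split; [|split].
- split=> [|a a' /=].
    exact: bounded_linB (bounded_lin_comp (bA_bounded_lin HB HE b) D_bounded_lin)
                        (bounded_lin_comp D_bounded_lin (lB_bounded_lin HX b)).
  rewrite (bA_mulA HB HE) !DM (iota_bA HE) (lB_mul HX) (linD (lB_lin HX _)) (lB_rB HX).
  by rewrite (rBB HX) opprD addrACA subrr add0r.
- split=> [|a a' /=].
    exact: bounded_linB (bounded_lin_comp (aB_bounded_lin HB HE b) D_bounded_lin)
                        (bounded_lin_comp D_bounded_lin (rB_bounded_lin HX b)).
  rewrite (aB_mulA HB HE) !DM (iota_aB HE) (rB_mul HX) (linD (rB_lin HX _)).
  by rewrite (linB (lB_lin HX _)) (lB_rB HX) opprD addrACA subrr addr0.
- move=> a a' /=.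
  have := congr1 D (mulA_bA HB HE a b a'); rewrite !DM (iota_bA HE) (rB_mul HX) => Dmid.
  rewrite (linB (lB_lin HX _)) -(lB_mul HX) -(iota_aB HE) (rBB HX).
  move: Dmid; set W := lB _ (D (bA b a')); set Z := rB (rB _ _) _.
  by move=> /(canRL (addrK Z)) ->; rewrite addrAC [_ + rB _ _]addrC addrK.
Qed.

Lemma ext_derD k b c : ext_der (k *: b + c) = padd (pscale k (ext_der b)) (ext_der c).
Proof.
apply: dpair_ext => a /=.
- by rewrite (bADl HB HE) D_bounded_lin.1 (lBDl HX) scalerBr opprD addrACA.
- by rewrite (aBDr HB HE) D_bounded_lin.1 (rBDr HX) scalerBr opprD addrACA.
Qed.

Lemma ext_der_bounded : exists C : K, forall b, dc_bounded (ext_der b) (C * `|b|).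
Proof.
have [Cx [Cx_gt0 CX]] := bimodule_bound HX.
have [Ce [Ce_gt0 CE]] := envelope_bound HE.
have [M M_gt0 D_le] := bounded_lin_gt0 D_bounded_lin.
exists (M * Ce + Cx * M) => b; split => a /=; apply: le_trans (ler_normB _ _) _.
- apply: le_trans (_ : M * (Ce * `|a| * `|b|) + Cx * `|b| * (M * `|a|) <= _).
    apply: lerD; first exact: le_trans (D_le _) (ler_wpM2l (ltW M_gt0) (CE _ _).1).
    by apply: le_trans (CX _ _).1 _; apply: ler_wpM2l; [rewrite mulr_ge0 // ltW | exact: D_le].
  by rewrite le_eqVlt; apply/orP; left; apply/eqP; ring.
- apply: le_trans (_ : M * (Ce * `|a| * `|b|) + Cx * (M * `|a|) * `|b| <= _).
    apply: lerD; first exact: le_trans (D_le _) (ler_wpM2l (ltW M_gt0) (CE _ _).2).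
    apply: le_trans (CX _ _).2 _; apply: ler_wpM2r => //.
    by apply: ler_wpM2l; [exact: ltW | exact: D_le].
  by rewrite le_eqVlt; apply/orP; left; apply/eqP; ring.
Qed.

Lemma ext_derM b c : ext_der (mulB b c) = padd (lact b (ext_der c)) (ract (ext_der b) c).
Proof.
apply: dpair_ext => a /=.
- by rewrite (bA_mul HB HE) (lB_mul HX) (linB (lB_lin HX _)) [RHS]addrC addrA subrK.
- by rewrite (aB_mul HB HE) (rB_mul HX) (rBB HX) addrA subrK.
Qed.

Lemma ext_der_iota a : ext_der (iota a) = iotaX la ra (D a).
Proof.
apply: dpair_ext => a' /=.
- by rewrite (bA_iota HE) DM addrAC subrr add0r.
- by rewrite (aB_iota HE) DM addrK.
Qed.

Lemma ext_der_derivation : dc_derivation dc mulB lact ract ext_der.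
Proof.
split; first exact: is_dc_ext_der.
split; first exact: ext_derD.
split; first exact: ext_der_bounded.
exact: ext_derM.
Qed.

Section AnyExtension.
Variable D' : B -> Defs.dpair A X.
Hypotheses (D'M : forall b c, D' (mulB b c) = padd (lact b (D' c)) (ract (D' b) c))
  (D'_iota : forall a, D' (iota a) = iotaX la ra (D a)).

Lemma extension_fst_mulA b a a' :
  (D' b).1 (mulA a a') = rB (D (bA b a)) (iota a') - lB b (rB (D a) (iota a')).
Proof.
have := congr1 (fun p : Defs.dpair A X => p.1 a') (D'M b (iota a)).
by rewrite -(iota_bA HE) !D'_iota /= (bA_iota HE) => ->; rewrite addrAC subrr add0r.
Qed.

Lemma extension_snd_mulA b a a' :
  (D' b).2 (mulA a' a) = lB (iota a') (D (aB a b)) - rB (lB (iota a') (D a)) b.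
Proof.
have := congr1 (fun p : Defs.dpair A X => p.2 a') (D'M (iota a) b).
by rewrite -(iota_aB HE) !D'_iota /= (aB_iota HE) => ->; rewrite addrK.
Qed.

End AnyExtension.

Lemma ext_der_unique D' : dense_square mulA ->
  dc_derivation dc mulB lact ract D' ->
  (forall a, D' (iota a) = iotaX la ra (D a)) -> D' = ext_der.
Proof.
move=> A2_dense [D'_dc [_ [_ D'M]]] D'_iota; apply: funext => b.
have [[D'1_bl _] [[D'2_bl _] _]] := D'_dc b.
have [[E1_bl _] [[E2_bl _] _]] := is_dc_ext_der b.
apply: injective_projections; apply: (bounded_lin_eq_dense_square A2_dense) => // a a'.
- by rewrite (extension_fst_mulA D'M D'_iota) (extension_fst_mulA ext_derM ext_der_iota).
- by rewrite (extension_snd_mulA D'M D'_iota) (extension_snd_mulA ext_derM ext_der_iota).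
Qed.

(* The first component of the inner identity at b = iota a reads
   D(a).a' = a.S(a') - S(a a'); hence (-S, -S - D) is a double centralizer. *)
Lemma inner_ext_der_dc_diff : dc_inner dc lact ract ext_der ->
  exists2 p, dc p & forall a, D a = p.1 a - p.2 a.
Proof.
move=> [p [[[S_bl SM] [[T_bl TM] ST]] ext_der_inner]].
have DS a a' : rB (D a) (iota a') = lB (iota a) (p.1 a') - p.1 (mulA a a').
  have := congr1 (fun q : Defs.dpair A X => q.1 a') (ext_der_inner (iota a)).
  by rewrite ext_der_iota /= (bA_iota HE).
exists (fun a => - p.1 a, fun a => - p.1 a - D a); last first.
  by move=> a /=; rewrite opprB addrC subrK.
split; [|split].
- split=> [|a a' /=]; first exact: bounded_linN.
  by rewrite SM (rBN HX).
- split=> [|a a' /=]; first exact: bounded_linB (bounded_linN S_bl) D_bounded_lin.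
  rewrite DM DS (linB (lB_lin HX _)) (linN (lB_lin HX _)) opprD opprB !addrA.
  by rewrite (addrAC (- _)) addNr add0r addrC.
- move=> a a' /=.
  by rewrite (linN (lB_lin HX _)) (rBB HX) (rBN HX) DS SM opprB addKr.
Qed.

End Extension.

End DoubleCentralizers.

Theorem theorem1p3 (K : numFieldType) (A B X : completeNormedModType K)
  (mulA : A -> A -> A) (mulB : B -> B -> B) (iota : A -> B)
  (bA : B -> A -> A) (aB : A -> B -> A)
  (lB : B -> X -> X) (rB : X -> B -> X) :
  banach_algebra mulA -> banach_algebra mulB ->
  envelope mulA mulB iota bA aB ->
  banach_bimodule mulB lB rB ->
  let la := fun a x => lB (iota a) x in
  let ra := fun x a => rB x (iota a) in
  let dc := is_dc mulA la ra in
  let lact := dc_lact lB aB in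
  let ract := dc_ract rB bA in
  banach_bimodule mulA la ra /\
  dc_banach_bimodule dc mulB lact ract /\
  (forall p, dc p -> derivation mulA la ra (fun a => p.1 a - p.2 a)) /\
  (forall D, derivation mulA la ra D ->
     exists Dt, dc_derivation dc mulB lact ract Dt /\
       (forall a, Dt (iota a) = iotaX la ra (D a)) /\
       (dense_square mulA ->
          (forall D', dc_derivation dc mulB lact ract D' ->
             (forall a, D' (iota a) = iotaX la ra (D a)) -> D' = Dt) /\
          (dc_inner dc lact ract Dt ->
             exists p, dc p /\ forall a, D a = p.1 a - p.2 a))).
Proof.
move=> _ HB HE HX; cbv zeta.
split; first exact: (restricted_banach_bimodule HE HX).
split; first exact: (dc_banach_bimodule_envelope HB HE HX).
split; first by move=> p; exact: (is_dc_diff_derivation HX).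
move=> D D_der; exists (ext_der bA aB lB rB D).
split; first exact: (ext_der_derivation HB HE HX D_der).
split; first exact: (ext_der_iota HE D_der).
move=> A2_dense; split=> [D'|]; first exact: (ext_der_unique HB HE HX D_der A2_dense).
by case/(inner_ext_der_dc_diff HE HX D_der) => p p_dc D_diff; exists p.
Qed.
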